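(* Let $(G,k)$ be an instance of PITVD, let $S\subseteq V(G)$ be such that $G-S$ is a simple (prop-int, tree)-graph, let $V_1$ be the set of vertices of the connected components of $G-S$ that contain a cycle, and fix a clique partition $\mathcal{K}$ of $G[V_1]$ obtained from a proper interval ordering. Let $C$ be a connected component of $G[V_1]$ and $\mathcal{K}_C$ the set of cliques of $\mathcal{K}$ contained in $C$. If a vertex $v\in S$ is adjacent to a vertex of each of at least $6k+5$ distinct cliques of $\mathcal{K}_C$, then $(G,k)$ is a yes-instance of PITVD if and only if $(G-v,k-1)$ is a yes-instance of PITVD.
   Context: PITVD: the input is an undirected multigraph $G$ (no self-loops) and an integer $k$; the question is whether there exists $X\subseteq V(G)$ with $|X|\le k$ such that $G-X$ is a simple graph and every connected component of $G-X$ is a proper interval graph or a tree. A simple graph is a (prop-int, tree)-graph if each component is a proper interval graph or a tree. A proper interval graph has a representation by closed unit-length intervals $I_u=[\mathrm{lp}_u,\mathrm{rp}_u]$, adjacency meaning intersection; a proper interval ordering is an ordering $v_1,\dots,v_n$ of the vertices with $\mathrm{lp}_{v_1}<\dots<\mathrm{lp}_{v_n}$. The clique partition from such an ordering is built greedily: $K_1$ consists of $v_1$ and all vertices $v_i$ whose left endpoint lies in $I_{v_1}$ (a prefix $v_1,\dots,v_i$ of the ordering); remove $K_1$ and repeat on the remaining ordered vertices to get $K_2$, and so on, giving the sequence $\mathcal{K}=(K_1,\dots,K_t)$. *)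

From mathcomp Require Import all_boot all_order all_algebra.
From Stdlib Require Import ClassicalEpsilon.
Set Implicit Arguments. Unset Strict Implicit. Unset Printing Implicit Defensive.
Import Order.TTheory GRing.Theory Num.Theory.

(* A multigraph G is given by a vertex set V : {set T} over a finite type T and an
   edge-multiplicity function m : T -> T -> nat (symmetric, no self-loops).
   G - X is the multigraph (V :\: X, m), i.e. the induced sub-multigraph on V :\: X.
   All notions below are relative to a vertex set A (the induced subgraph G[A]). *)

Definition asbool (P : Prop) : bool :=
  if excluded_middle_informative P then true else false.

Section Graphs.
Variable T : finType.
Implicit Types (m : T -> T -> nat) (A C : {set T}).

Definition adj m (x y : T) : bool := 0 < m x y.

Definition simple_on A m : Prop := forall x y, x \in A -> y \in A -> m x y <= 1.

Definition rel_on A m : rel T := fun x y => [&& x \in A, y \in A & adj m x y].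

Definition comp A m (x : T) : {set T} := [set y | connect (rel_on A m) x y].

Definition is_component A m C : Prop := exists2 x, x \in A & C = comp A m x.

Definition connected_on C m : Prop :=
  forall x y, x \in C -> y \in C -> connect (rel_on C m) x y.

Definition has_cycle C m : Prop :=
  exists s : seq T, [/\ 3 <= size s, uniq s, all (fun x => x \in C) s
                      & path.cycle (adj m) s].

Definition tree_on C m : Prop := C != set0 /\ connected_on C m /\ ~ has_cycle C m.

(* unit interval representation of G[C]: closed intervals [lp u, lp u + 1];
   two of them intersect iff |lp u - lp w| <= 1 *)
Definition unit_interval_rep C m (lp : T -> rat) : Prop :=
  forall x y, x \in C -> y \in C -> x != y ->
    (adj m x y <-> (`|lp x - lp y| <= 1)%R).

Definition proper_interval_on C m : Prop := exists lp, unit_interval_rep C m lp.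

Definition propint_tree_graph A m : Prop :=
  simple_on A m /\
  forall C, is_component A m C -> proper_interval_on C m \/ tree_on C m.

Definition PITVD (V : {set T}) m (k : int) : Prop :=
  exists X : {set T}, [/\ X \subset V, (#|X|%:Z <= k)%R &
                         propint_tree_graph (V :\: X) m].

Definition cyclic_part A m : {set T} :=
  [set x in A | asbool (has_cycle (comp A m x) m)].

(* greedy clique partition from the proper interval ordering given by the left
   endpoints lp (restricted to the remaining vertices R): the first clique consists
   of the vertex v1 with the smallest left endpoint and all u with
   lp u \in [lp v1, lp v1 + 1], i.e. all u in R with lp u <= lp w + 1 for all w in R. *)
Fixpoint greedy_cliques (n : nat) (lp : T -> rat) (R : {set T}) : seq {set T} :=
  match n with
  | 0 => [::]
  | n'.+1 =>
      if R == set0 then [::] else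
      let K := [set u in R | [forall w in R, (lp u <= lp w + 1)%R]] in
      K :: greedy_cliques n' lp (R :\: K)
  end.

Definition clique_partition (lp : T -> rat) (A : {set T}) : seq {set T} :=
  greedy_cliques #|T| lp A.

End Graphs.

From Pilot Require Import Defs.
From mathcomp Require Import all_boot all_order all_algebra.
From mathcomp Require Import zify lra.
Import Order.TTheory GRing.Theory Num.Theory.
Set Implicit Arguments. Unset Strict Implicit. Unset Printing Implicit Defensive.

(* Suppose a solution X with |X| <= k avoids v.  Choosing in each of the at least
   5(|X| + 1) cliques one neighbour of v gives a set F in which any three vertices
   with increasing left endpoints have extreme endpoints more than 1 apart, because
   greedy cliques two steps apart are.  The |X| left endpoints of X cannot meet
   every window of five consecutive elements of F, so some w0 < ... < w4 span an
   X-free range; a = w0, b = w2, c = w4 are pairwise non-adjacent neighbours of v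
   in the component D of v in G - X.  If D is a proper interval graph, v, a, b, c
   form a claw.  If D is a tree, a and b are joined in the connected unit interval
   graph C through vertices whose left endpoints lie between theirs, hence outside
   X, and this path closes a cycle with v.  So every solution contains v. *)

Local Open Scope ring_scope.

Lemma sorted_window_avoiding (d : Order.disp_t) (R : orderType d) (x0 : R)
    (l p : nat) (s Y : seq R) :
  sorted <%O s -> (size Y <= p)%N -> (l.+1 * p.+1 <= size s)%N ->
  exists2 i, (i + l < size s)%N &
    {in Y, forall y, ~~ (nth x0 s i <= y <= nth x0 s (i + l))%O}.
Proof.
elim: p s Y => [|p IH] s Y s_sorted sizeY sizes.
  by exists 0%N; [lia | case: Y sizeY].
have [hitY|] := boolP (has (fun y => nth x0 s 0 <= y <= nth x0 s l)%O Y); last first.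
  by move/hasPn=> freeY; exists 0%N; [lia | exact: freeY].
set Y' := [seq y <- Y | (nth x0 s l < y)%O].
have sizeY' : (size Y' <= p)%N.
  suff : (size Y' < size Y)%N by lia.
  rewrite size_filter -(count_predC (fun y => nth x0 s l < y)%O Y) -addn1 leq_add2l.
  rewrite -has_count; apply: sub_has hitY => y /andP[_] /=.
  by rewrite -leNgt.
have [||i ilt freeY'] := IH (drop l.+1 s) Y' _ sizeY'.
- exact: drop_sorted.
- by rewrite size_drop; lia.
rewrite size_drop in ilt.
exists (l.+1 + i)%N; first lia.
move=> y yY; have [yY'|] := boolP (y \in Y').
  by have := freeY' y yY'; rewrite !nth_drop addnA.
rewrite mem_filter yY andbT -leNgt => yl.
apply/negP=> /andP[+ _]; apply/negP; rewrite -ltNge.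
apply: le_lt_trans yl _.
by apply: (sorted_ltn_nth lt_trans) => //; rewrite ?inE /=; lia.
Qed.

Section GreedyCliques.
Variables (T : finType) (lp : T -> rat).

Let greedy_head (R : {set T}) := [set u in R | [forall w in R, lp u <= lp w + 1]].

Lemma greedy_cliques_sub n R K : K \in greedy_cliques n lp R -> K \subset R.
Proof.
elim: n R => [|n IH] R //=; case: ifP => // _.
rewrite inE => /orP[/eqP->|/IH sKR]; first by apply/subsetP=> u; rewrite inE => /andP[].
exact: subset_trans sKR (subsetDl _ _).
Qed.

Lemma greedy_head_far R y :
  y \in R :\: greedy_head R -> exists2 w, w \in R & lp w + 1 < lp y.
Proof.
rewrite !inE => /andP[/nandP[/negP//|/forallPn[w]]].
by rewrite negb_imply -ltNge => /andP[wR ltwy] _; exists w.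
Qed.

Lemma greedy_head_lt R x y :
  x \in greedy_head R -> y \in R :\: greedy_head R -> lp x < lp y.
Proof.
rewrite inE => /andP[_ /forallP headx] /greedy_head_far[w wR ltwy].
by apply: le_lt_trans ltwy; have := headx w; rewrite wR.
Qed.

Lemma mem_nth_greedy_cliques n R j y :
  y \in nth set0 (greedy_cliques n lp R) j -> y \in R.
Proof.
have [jlt|jge] := ltnP j (size (greedy_cliques n lp R)).
  exact/subsetP/greedy_cliques_sub/mem_nth.
by rewrite nth_default // inE.
Qed.

Lemma mem_nth_greedy_cliques_tail n R j y :
  y \in nth set0 (greedy_cliques n lp R) j.+1 -> y \in R :\: greedy_head R.
Proof.
case: n => [|n] /=; first by rewrite inE.
by case: ifP => _; [rewrite nth_nil inE | exact: mem_nth_greedy_cliques].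
Qed.

Lemma greedy_cliques_nth_lt n R i j x y : (i < j)%N ->
  x \in nth set0 (greedy_cliques n lp R) i -> y \in nth set0 (greedy_cliques n lp R) j ->
  lp x < lp y /\ ((i.+1 < j)%N -> lp x + 1 < lp y).
Proof.
elim: n R i j => [|n IH] R i j ltij xi yj; first by rewrite nth_nil inE in xi.
case: i ltij xi => [|i] ltij xi; last first.
  case: j ltij yj => [|j] // ltij; move: xi => /=.
  by case: ifP => _; [rewrite nth_nil inE | exact: IH].
have yR : y \in R :\: greedy_head R.
  by case: j ltij yj => [|j] // _; apply: mem_nth_greedy_cliques_tail.
have headx : x \in greedy_head R by move: xi => /=; case: ifP => _; rewrite ?inE.
split=> [|lt1j]; first exact: greedy_head_lt headx yR.
case: j ltij yj lt1j {yR} => [|[|j]] // _ + _ => /=.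
case: ifP => _; first by rewrite nth_nil inE.
move/mem_nth_greedy_cliques_tail/greedy_head_far => [w wR ltwy].
by apply: lt_trans ltwy; rewrite ltrD2r; exact: greedy_head_lt headx wR.
Qed.

Definition unit_spread (F : {set T}) : Prop :=
  {in F & &, forall x y z, lp x < lp y -> lp y < lp z -> lp x + 1 < lp z}.

Variables (n : nat) (R : {set T}).
Let L := greedy_cliques n lp R.

Lemma greedy_cliques_index_le K1 K2 x y : K1 \in L -> K2 \in L ->
  x \in K1 -> y \in K2 -> lp y <= lp x -> (index K2 L <= index K1 L)%N.
Proof.
move=> K1L K2L xK1 yK2 leyx; rewrite leqNgt; apply/negP => lt12.
have [] := @greedy_cliques_nth_lt n R _ _ x y lt12; rewrite ?nth_index //.
by rewrite ltNge leyx.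
Qed.

Lemma greedy_cliques_transversal (H : {set {set T}}) (N : pred T) :
  {subset H <= L} -> {in H, forall K : {set T}, [exists u in K, N u]} ->
  exists F : {set T}, [/\ #|F| = #|H|, F \subset cover H, {subset F <= N},
                         {in F &, injective lp} & unit_spread F].
Proof.
move=> HL HN; have [->|[K0 K0H]] := set_0Vmem H.
  by exists set0; split; rewrite ?cards0 ?sub0set // => x; rewrite inE.
have [x0 _] := existsP (HN K0 K0H).
pose f (K : {set T}) := odflt x0 [pick u in K | N u].
have fK K : K \in H -> f K \in K /\ N (f K).
  move=> KH; rewrite /f; case: pickP => [u /andP[]//|noN].
  by have /existsP[u /andP[uK Nu]] := HN K KH; have := noN u; rewrite uK Nu.
have index_f K1 K2 : K1 \in H -> K2 \in H ->
    lp (f K2) <= lp (f K1) -> (index K2 L <= index K1 L)%N.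
  by move=> K1H K2H; apply: greedy_cliques_index_le (fK _ K1H).1 (fK _ K2H).1; apply: HL.
have nth_index_f K : K \in H -> nth set0 L (index K L) = K.
  by move=> KH; rewrite nth_index ?HL.
have index_f_lt K1 K2 : K1 \in H -> K2 \in H ->
    lp (f K1) < lp (f K2) -> (index K1 L < index K2 L)%N.
  move=> K1H K2H lt12; rewrite ltn_neqAle index_f ?ltW // andbT.
  apply: contraTneq lt12 => /(congr1 (nth set0 L)).
  by rewrite !nth_index_f // => ->; rewrite ltxx.
have eq_f K1 K2 : K1 \in H -> K2 \in H -> lp (f K1) = lp (f K2) -> K1 = K2.
  move=> K1H K2H e; rewrite -(nth_index_f K1) // -(nth_index_f K2) //.
  by congr nth; apply/anti_leq; rewrite !index_f // e.
exists (f @: H); split.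
- by apply: card_in_imset => K1 K2 K1H K2H e; apply: eq_f; rewrite ?e.
- apply/subsetP => _ /imsetP[K KH ->]; apply/bigcupP.
  by exists K => //; exact: (fK K KH).1.
- by move=> _ /imsetP[K KH ->]; exact: (fK K KH).2.
- by move=> _ _ /imsetP[K1 K1H ->] /imsetP[K2 K2H ->] /(eq_f _ _ K1H K2H) ->.
move=> _ _ _ /imsetP[K1 K1H ->] /imsetP[K2 K2H ->] /imsetP[K3 K3H ->] lt12 lt23.
have [i12 i23] := (index_f_lt _ _ K1H K2H lt12, index_f_lt _ _ K2H K3H lt23).
have := @greedy_cliques_nth_lt n R _ _ (f K1) (f K3) (ltn_trans i12 i23).
rewrite -/L !nth_index_f // => /(_ (fK _ K1H).1 (fK _ K3H).1) [_]; apply.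
exact: leq_ltn_trans i23.
Qed.

End GreedyCliques.

Lemma unit_spread_triple_avoiding (T : finType) (lp : T -> rat) (F X : {set T}) :
  {in F &, injective lp} -> unit_spread lp F -> (5 * (#|X|).+1 <= #|F|)%N ->
  exists a b c, [/\ [&& a \in F, b \in F & c \in F],
                    lp a + 1 < lp b, lp b + 1 < lp c
                  & {in X, forall z, ~~ (lp a <= lp z <= lp c)}].
Proof.
move=> lp_inj spreadF cardF.
have [F0|[x0 _]] := set_0Vmem F; first by rewrite F0 cards0 in cardF.
set s := sort (fun x y => lp x <= lp y) (enum F).
have sF x : (x \in s) = (x \in F) by rewrite mem_sort mem_enum.
have s_sorted : sorted <%R (map lp s).
  rewrite lt_sorted_uniq_le map_inj_in_uniq; last by move=> x y; rewrite !sF; apply: lp_inj.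
  rewrite sort_uniq enum_uniq sorted_map.
  by apply: sort_sorted => x y; exact: le_total.
have [||i ilt freeX] := @sorted_window_avoiding _ _ 0 4 #|X| _ (map lp (enum X)) s_sorted.
- by rewrite size_map -cardE.
- by rewrite size_map size_sort -cardE.
rewrite size_map in ilt.
pose w j := nth x0 s (i + j).
have lp_w j : (j <= 4)%N -> nth 0 (map lp s) (i + j) = lp (w j).
  by move=> j4; rewrite (nth_map x0) //; lia.
have wF j : (j <= 4)%N -> w j \in F
  by move=> j4; rewrite -sF; apply: mem_nth; apply: leq_ltn_trans ilt; rewrite leq_add2l.
have lt_w j1 j2 : (j1 < j2 <= 4)%N -> lp (w j1) < lp (w j2).
  move=> /andP[j12 j2_4]; rewrite -!lp_w //; last by apply: leq_trans j2_4; exact: ltnW.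
  by apply: (sorted_ltn_nth lt_trans) => //; rewrite ?inE ?size_map /=; lia.
exists (w 0), (w 2), (w 4); split.
- by rewrite !wF.
- by apply: (spreadF (w 0) (w 1) (w 2)); rewrite ?wF ?lt_w.
- by apply: (spreadF (w 2) (w 3) (w 4)); rewrite ?wF ?lt_w.
move=> z zX; have := freeX (lp z) (map_f lp _); rewrite mem_enum => /(_ zX).
by have := lp_w 0 isT; rewrite addn0 => ->; rewrite lp_w.
Qed.

Lemma claw_free_unit_interval (R : realFieldType) (t a b c : R) :
  `|t - a| <= 1 -> `|t - b| <= 1 -> `|t - c| <= 1 ->
  1 < `|a - b| -> 1 < `|b - c| -> 1 < `|a - c| -> False.
Proof.
rewrite !ler_norml !ltr_normr => /andP[? ?] /andP[? ?] /andP[? ?].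
by case/orP=> ?; case/orP=> ?; case/orP=> ?; lra.
Qed.

Section Components.
Variables (T : finType) (m : T -> T -> nat).
Hypothesis m_sym : forall x y, m x y = m y x.
Implicit Types A B D : {set T}.

Lemma rel_on_sym B : symmetric (rel_on B m).
Proof. by move=> x y; rewrite /rel_on /adj m_sym andbCA. Qed.

Lemma rel_on_subset B B' : B \subset B' -> subrel (rel_on B m) (rel_on B' m).
Proof. by move=> /subsetP sBB' x y /and3P[xB yB xy]; rewrite /rel_on !sBB'. Qed.

Lemma comp_subset B x : x \in B -> Defs.comp B m x \subset B.
Proof.
move=> xB; apply/subsetP => y; rewrite inE => /connectP[p + ->] {y}.
by elim: p x xB => //= y p IH x _ /andP[/and3P[_ yB _]]; apply: IH.
Qed.

Lemma comp_connect B x u w :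
  u \in Defs.comp B m x -> w \in Defs.comp B m x -> connect (rel_on B m) u w.
Proof.
rewrite !inE => xu; apply: connect_trans.
by rewrite (sym_connect_sym (@rel_on_sym B)).
Qed.

Lemma has_cycle_comp A B v a b : B \subset A -> v \in A -> v \notin B -> a != b ->
  adj m v a -> adj m v b -> connect (rel_on B m) a b -> has_cycle (Defs.comp A m v) m.
Proof.
move=> BA vA vB ab va vb /connectP[p ap bp]; case: (shortenP ap) bp => q + uq _.
case: q uq => [_ _ ba|z q uq]; first by rewrite ba eqxx in ab.
move=> /[dup] azq /= /andP[/and3P[aB zB _] zq] bq.
have azq_B : {subset a :: z :: q <= B}.
  by move=> x /(path_connect azq) ax; apply: (subsetP (comp_subset aB)); rewrite inE.
exists [:: v, a, z & q]; split => //.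
- by rewrite cons_uniq uq andbT; apply: contra vB => /azq_B.
- apply/allP => x; rewrite inE => /predU1P[->|xazq]; first by rewrite inE.
  have va_A : rel_on A m v a by rewrite /rel_on vA va (subsetP BA).
  rewrite inE; apply: connect_trans (connect1 va_A) _.
  exact: path_connect (sub_path (rel_on_subset BA) azq) _ xazq.
- have bv : adj m b v by rewrite /adj m_sym.
  rewrite /= rcons_path /= va -bq bv andbT -/(path (adj m) a (z :: q)).
  by apply: sub_path azq => x y /and3P[].
Qed.

Lemma claw_not_proper_interval D v a b c : {subset [:: v; a; b; c] <= D} ->
  uniq [:: v; a; b; c] -> [&& adj m v a, adj m v b & adj m v c] ->
  ~~ [|| adj m a b, adj m b c | adj m a c] -> ~ proper_interval_on D m.
Proof.
move=> sD; rewrite /= !inE !negb_or -!andbA andbT.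
case/and4P=> v_a v_b v_c /and3P[a_b a_c b_c] /and3P[va vb vc] /and3P[nab nbc nac].
case=> lp rep.
have near x y : x \in D -> y \in D -> x != y -> adj m x y -> `|lp x - lp y| <= 1.
  by move=> xD yD xy /(rep x y xD yD xy).
have far x y : x \in D -> y \in D -> x != y -> ~~ adj m x y -> 1 < `|lp x - lp y|.
  by move=> xD yD xy; apply: contraNT; rewrite -leNgt => /(rep x y xD yD xy).
have [vD aD bD cD] : [/\ v \in D, a \in D, b \in D & c \in D].
  by rewrite !sD ?inE ?eqxx ?orbT.
by apply: (@claw_free_unit_interval _ (lp v) (lp a) (lp b) (lp c));
  first [exact: near | exact: far].
Qed.

End Components.


Section UnitIntervalComponent.
Variables (T : finType) (m : T -> T -> nat) (A : {set T}) (lp : T -> rat).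
Hypothesis m_sym : forall x y, m x y = m y x.
Hypothesis A_rep : unit_interval_rep A m lp.

Lemma unit_interval_far x y : x \in A -> y \in A -> lp x + 1 < lp y ->
  x != y /\ ~~ adj m x y.
Proof.
move=> xA yA ltxy; have xy : x != y by apply: contraTneq ltxy => ->; lra.
by split=> //; apply/negP => /(A_rep xA yA xy); rewrite ler_norml => /andP[]; lra.
Qed.

Lemma unit_interval_near x y : x \in A -> y \in A -> x != y ->
  lp x <= lp y <= lp x + 1 -> adj m x y.
Proof.
move=> xA yA xy /andP[? ?]; apply/(A_rep xA yA xy).
by rewrite ler_norml; apply/andP; split; lra.
Qed.

Lemma path_unit_crossing t y p : path (rel_on A m) y p ->
  lp y <= t < lp (last y p) -> exists2 z, z \in p & t < lp z <= t + 1.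
Proof.
elim: p y => [|z p IH] y /=; first by move=> _ /andP[/le_lt_trans/[apply]]; rewrite ltxx.
case/andP=> /and3P[yA zA yz] zp /andP[yt tlast].
have [zt|tz] := leP (lp z) t.
  have [|z' z'p ?] := IH z zp; first by rewrite zt.
  by exists z'; rewrite // inE z'p orbT.
exists z; rewrite ?inE ?eqxx // tz /=.
have yz' : y != z by apply: contraTneq tz => <-; rewrite -leNgt.
by move: yz => /(A_rep yA zA yz'); rewrite ler_norml => /andP[? ?]; lra.
Qed.

Variables (x0 : T) (x0A : x0 \in A).
Let C := Defs.comp A m x0.

Lemma comp_unit_step u w : u \in C -> w \in C -> lp u < lp w ->
  exists2 z, z \in C & lp u < lp z <= lp u + 1.
Proof.
move=> uC wC ltuw; have /connectP[p up wp] := comp_connect m_sym uC wC.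
have [|z zp ?] := path_unit_crossing (t := lp u) up; first by rewrite lexx -wp.
exists z => //; rewrite inE; apply: connect_trans (path_connect up _).
  by move: uC; rewrite inE.
by rewrite inE zp orbT.
Qed.

Lemma comp_unit_window_connect (B : {set T}) u w : u \in C -> w \in C -> lp u <= lp w ->
  {in C, forall z, lp u <= lp z <= lp w -> z \in B} -> connect (rel_on B m) u w.
Proof.
have [n] := ubnP #|[set z in C | lp u < lp z <= lp w]|.
elim: n u => // n IH u ltcard uC wC leuw inB.
have CA : {subset C <= A} := subsetP (comp_subset m x0A).
have uB : u \in B by rewrite inB ?lexx.
have [near|far] := leP (lp w) (lp u + 1).
  have [<-|uw] := eqVneq u w; first exact: connect0.
  apply: connect1; rewrite /rel_on uB inB ?lexx ?leuw //=.
  by apply: unit_interval_near; rewrite ?CA ?leuw.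
have [z zC /andP[ltuz lezu]] := comp_unit_step uC wC (ltac:(lra) : lp u < lp w).
have lezw : lp z <= lp w by lra.
apply: connect_trans (connect1 (_ : rel_on B m u z)) (IH z _ zC wC lezw _).
- rewrite /rel_on uB inB ?lezw ?(ltW ltuz) //=.
  apply: unit_interval_near; rewrite ?CA ?(ltW ltuz) //.
  by apply: contraTneq ltuz => ->; rewrite ltxx.
- rewrite -ltnS; apply: leq_trans ltcard; rewrite ltnS; apply/proper_card/properP; split.
    by apply/subsetP => y; rewrite !inE => /and3P[-> /(lt_trans ltuz) -> ->].
  by exists z; rewrite in_set zC /= ?ltxx ?ltuz ?lezw.
- by move=> y yC /andP[lezy leyw]; rewrite inB ?leyw ?(le_trans (ltW ltuz)).
Qed.

End UnitIntervalComponent.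

Lemma PITVD_add_vertex (T : finType) (V : {set T}) m k v :
  v \in V -> PITVD (V :\ v) m (k - 1) -> PITVD V m k.
Proof.
move=> vV [X [XV cardX solX]]; exists (v |: X); split.
- by rewrite subUset sub1set vV (subset_trans XV) ?subD1set.
- by rewrite cardsU1; move: cardX; case: (v \notin X) => /=; lia.
- by rewrite -setDDl.
Qed.

Lemma PITVD_remove_vertex (T : finType) (V X : {set T}) m k v :
  X \subset V -> #|X|%:Z <= k -> propint_tree_graph (V :\: X) m -> v \in X ->
  PITVD (V :\ v) m (k - 1).
Proof.
move=> XV cardX solX vX; exists (X :\ v); split.
- exact: setSD.
- by move: cardX; rewrite (cardsD1 v X) vX; lia.
- suff -> : (V :\ v) :\: (X :\ v) = V :\: X by [].
  by apply/setP => x; rewrite !inE; case: eqVneq => // ->; rewrite vX.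
Qed.

Section HighDegreeVertex.
Variables (T : finType) (V A : {set T}) (m : T -> T -> nat) (lp : T -> rat) (x0 v : T).
Hypothesis m_sym : forall x y, m x y = m y x.
Hypothesis A_rep : unit_interval_rep A m lp.
Hypotheses (AV : A \subset V) (x0A : x0 \in A) (vV : v \in V) (vA : v \notin A).
Let C := Defs.comp A m x0.
Implicit Type X : {set T}.

Lemma propint_tree_solution_hits_window X a b c :
  v \notin X -> {subset [:: a; b; c] <= C} -> [&& adj m v a, adj m v b & adj m v c] ->
  lp a + 1 < lp b -> lp b + 1 < lp c -> propint_tree_graph (V :\: X) m ->
  exists2 z, z \in C :&: X & lp a <= lp z <= lp c.
Proof.
move=> vX sC /and3P[va vb vc] ab bc [_ compX].
apply/exists_inP; apply: contraT; rewrite negb_exists_in => /forall_inP freeX; exfalso.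
have CA : {subset C <= A} := subsetP (comp_subset m x0A).
have [aC bC cC] : [/\ a \in C, b \in C & c \in C] by rewrite !sC ?inE ?eqxx ?orbT.
have [a_b nab] := unit_interval_far A_rep (CA a aC) (CA b bC) ab.
have [b_c nbc] := unit_interval_far A_rep (CA b bC) (CA c cC) bc.
have [a_c nac] : a != c /\ ~~ adj m a c.
  by apply: (unit_interval_far A_rep (CA a aC) (CA c cC)); lra.
have vVX : v \in V :\: X by rewrite inE vX vV.
have CVX z : z \in C -> lp a <= lp z <= lp c -> z \in V :\: X.
  move=> zC range; rewrite inE (subsetP AV) ?CA // andbT.
  by apply: contraTN range => zX; apply: freeX; rewrite inE zC.
set D := Defs.comp (V :\: X) m v.
have inD z : z \in C -> lp a <= lp z <= lp c -> adj m v z -> z \in D.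
  by move=> zC range vz; rewrite inE; apply: connect1; rewrite /rel_on vVX CVX.
case: (compX D) => [|PI|[_ [_ acyclic]]]; first by exists v.
- apply: (@claw_not_proper_interval _ m D v a b c _ _ _ _ PI) => [z|||].
  + rewrite !in_cons in_nil orbF => /or4P[] /eqP->; first by rewrite inE connect0.
    * by apply: inD aC _ va; rewrite lexx; lra.
    * by apply: inD bC _ vb; apply/andP; split; lra.
    * by apply: inD cC _ vc; rewrite lexx andbT; lra.
  + have vC z : z \in C -> v != z by move=> /CA; apply: contraTneq => <-.
    by rewrite /= !inE !negb_or a_b a_c b_c !vC.
  + by rewrite va vb vc.
  + by rewrite (negPf nab) (negPf nbc) (negPf nac).
apply: acyclic; apply: (has_cycle_comp m_sym (B := C :\: X)) a_b va vb _.
- by apply/subsetP => z; rewrite inE => /andP[zX /CA /(subsetP AV) zV]; rewrite inE zX zV.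
- exact: vVX.
- by rewrite inE negb_and (contra (CA v)) ?vA ?orbT.
apply: (comp_unit_window_connect m_sym A_rep x0A aC bC); first lra.
move=> z zC /andP[leaz lezb].
have /setDP[_ zX] : z \in V :\: X by apply: CVX; rewrite // leaz /=; lra.
by rewrite inE zX.
Qed.

Lemma propint_tree_solution_contains_vertex X :
  (5 * #|X|.+1 <= #|[set K : {set T} | [&& K \in clique_partition lp A,
                        K \subset C & [exists u in K, adj m v u]]]|)%N ->
  propint_tree_graph (V :\: X) m -> v \in X.
Proof.
set H := [set K | _] => many solX; apply/negPn/negP => vX.
have [||F [cardF FH Fv lp_inj spreadF]] :=
  @greedy_cliques_transversal _ lp #|T| A H (adj m v).
- by move=> K; rewrite inE => /and3P[].
- by move=> K; rewrite inE => /and3P[].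
have FC : {subset F <= C}.
  by apply/subsetP/(subset_trans FH)/bigcupsP => K; rewrite inE => /and3P[].
have [|a [b [c [/and3P[aF bF cF] ab bc freeX]]]] :=
  @unit_spread_triple_avoiding _ lp F X lp_inj spreadF; first by rewrite cardF.
have [||z /setIP[_ zX] range] := propint_tree_solution_hits_window vX _ _ ab bc solX.
- by move=> z; rewrite !in_cons in_nil orbF => /or3P[] /eqP->; apply: FC.
- by apply/and3P; split; apply: Fv.
by move: range; apply/negP; apply: freeX.
Qed.

End HighDegreeVertex.

Theorem lemma34 (T : finType) (V : {set T}) (m : T -> T -> nat)
  (m_sym : forall x y, m x y = m y x) (m_loopless : forall x, m x x = 0%N)
  (k : int) (S : {set T}) (hSV : S \subset V)
  (hS : propint_tree_graph (V :\: S) m)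
  (lp : T -> rat)
  (hrep : unit_interval_rep (cyclic_part (V :\: S) m) m lp)
  (hinj : {in cyclic_part (V :\: S) m &, injective lp})
  (C : {set T}) (hC : is_component (cyclic_part (V :\: S) m) m C)
  (v : T) (hv : v \in S)
  (hdeg : (6 * k + 5 <=
      #|[set K : {set T} | [&& K \in clique_partition lp (cyclic_part (V :\: S) m),
                               K \subset C & [exists u in K, adj m v u]]]|%:Z)%R) :
  PITVD V m k <-> PITVD (V :\ v) m (k - 1)%R.
Proof.
have vV : v \in V := subsetP hSV v hv.
split=> [[X [XV cardX solX]]|]; last exact: PITVD_add_vertex.
apply: (PITVD_remove_vertex XV cardX solX).
case: hC hdeg => x0 x0A -> hdeg; set A := cyclic_part (V :\: S) m in hrep x0A hdeg.
have AVS : A \subset V :\: S by apply/subsetP => x; rewrite inE => /andP[].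
apply: (propint_tree_solution_contains_vertex m_sym hrep _ x0A vV _ _ solX).
- exact: subset_trans AVS (subsetDl V S).
- by apply/negP => /(subsetP AVS); rewrite inE hv.
- by move: hdeg; lia.
Qed.
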